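(* Let $n<m$ and consider the uniform-threshold game $G_t=\langle n,m,p,t\rangle$. (i) If $\frac{1}{\lceil 2m/n\rceil-1}<p\le\frac{1}{\lceil m/n\rceil}$ and $t>p-\frac{p(\lfloor 1/p\rfloor+1)-1}{\lceil 2m/n\rceil-\lfloor 1/p\rfloor}$, let $s^*$ be a pure equilibrium with $w_j(s^* )=p$ for all $j$. (ii) If $p>\frac{1}{\lceil m/n\rceil}$ and there is $\epsilon>0$ with $t\ge(1-\frac nm)\frac nm+\epsilon$ when $m\bmod n=0$, and $t\ge \frac{1}{\lceil m/n\rceil}$ otherwise, let $s^*$ be a pure equilibrium with $w_j(s^* )=\frac{1}{\lceil m/n\rceil}$ for all $j$. In both cases $s^*$ maximizes the users' social welfare, i.e. $SW(s^* )\ge SW(s)$ for every strategy profile $s$, where $SW(s)=-\max_{1\le j\le m}|p-w_j(s)|$, and it maximizes publishers' exposure: every query is won by some player.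
   Context: Setting: integers $n,m$ with $n<m$ ($n$ players, queries $q_1,\dots,q_m$), a peak value $p\in(0,1]$ and a score function $f:[0,1]\to[0,1]$ single-peaked at $p$ ($p$ is the unique point such that $f$ is non-decreasing on $[0,p]$ and non-increasing on $[p,1]$). Each player $i$ chooses $d_i\in D=\{d\in[0,1]^m:\sum_j d^j\le1\}$, with score $f(d_i^j)$ for $q_j$; $s=(d_1,\dots,d_n)$ is a strategy profile. In the game $G_t=\langle n,m,p,t\rangle$ (uniform threshold $t$ for every query), player $i$'s document is eligible for $q_j$ iff $d_i^j\ge t$; among eligible documents those of highest score are the winners of $q_j$; if $q_j$ has $h_j(s)$ winners each receives $1/h_j(s)$, and a query with no eligible document is won by no player. $w_j(s)$ denotes the value $d_i^j$ of a winner of $q_j$ ($0$ if there is none). A pure equilibrium is a pure Nash equilibrium (no player can strictly increase her utility by a unilateral change of document) in which every query has at least one winner. Such equilibria $s^*$ exist under the hypotheses of (i) and (ii). *)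

From Stdlib Require Import Reals Lra Lia Arith ClassicalEpsilon.
Open Scope R_scope.

Fixpoint rsum (k : nat) (g : nat -> R) : R :=
  match k with O => 0 | S k' => rsum k' g + g k' end.

(* max(0, g 0, ..., g (k-1)); used only on nonnegative g with k >= 1. *)
Fixpoint rmax (k : nat) (g : nat -> R) : R :=
  match k with O => 0 | S k' => Rmax (rmax k' g) (g k') end.

Definition floorR (x : R) : Z := Int_part x.
Definition ceilR (x : R) : Z := (- Int_part (- x))%Z.

Definition valid_doc (m : nat) (d : nat -> R) : Prop :=
  (forall j, (j < m)%nat -> 0 <= d j <= 1) /\ rsum m d <= 1.

(* A strategy profile: s i = document of player i, for i < n. *)
Definition profile := nat -> nat -> R.

Definition valid_profile (n m : nat) (s : profile) : Prop :=
  forall i, (i < n)%nat -> valid_doc m (s i).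

Definition nondecr_on (f : R -> R) (a b : R) : Prop :=
  forall x y, a <= x -> x <= y -> y <= b -> f x <= f y.
Definition nonincr_on (f : R -> R) (a b : R) : Prop :=
  forall x y, a <= x -> x <= y -> y <= b -> f y <= f x.

Definition single_peaked (f : R -> R) (p : R) : Prop :=
  (forall x, 0 <= x <= 1 -> 0 <= f x <= 1) /\
  0 <= p <= 1 /\ nondecr_on f 0 p /\ nonincr_on f p 1 /\
  (forall q, 0 <= q <= 1 -> nondecr_on f 0 q -> nonincr_on f q 1 -> q = p).

Section Game.
Variables (n m : nat) (f : R -> R) (t : R).

Definition eligible (s : profile) (i j : nat) : Prop := t <= s i j.

Definition winner (s : profile) (i j : nat) : Prop :=
  (i < n)%nat /\ eligible s i j /\
  (forall k, (k < n)%nat -> eligible s k j -> f (s k j) <= f (s i j)).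

Definition indic (P : Prop) : R :=
  if excluded_middle_informative P then 1 else 0.

Definition nwinners (s : profile) (j : nat) : R :=
  rsum n (fun i => indic (winner s i j)).

Definition utility (s : profile) (i : nat) : R :=
  rsum m (fun j => indic (winner s i j) / nwinners s j).

Definition update (s : profile) (i : nat) (d : nat -> R) : profile :=
  fun k => if Nat.eqb k i then d else s k.

Definition has_winner (s : profile) (j : nat) : Prop :=
  exists i, winner s i j.

(* pure equilibrium: pure Nash equilibrium in which every query has a winner *)
Definition pure_equilibrium (s : profile) : Prop :=
  valid_profile n m s /\
  (forall i d, (i < n)%nat -> valid_doc m d ->
     utility (update s i d) i <= utility s i) /\
  (forall j, (j < m)%nat -> has_winner s j).

(* w_j(s): the value d_i^j of a (chosen) winner of q_j, 0 if there is none *)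
Definition wval (s : profile) (j : nat) : R :=
  match excluded_middle_informative (has_winner s j) with
  | left _ => s (epsilon (inhabits O) (fun i => winner s i j)) j
  | right _ => 0
  end.

End Game.

Definition SW (n m : nat) (f : R -> R) (t p : R) (s : profile) : R :=
  - rmax m (fun j => Rabs (p - wval n f t s j)).

(** In (i) every winning value equals the peak [p], so the welfare of [s*] is [0],
    the largest possible value.

    In (ii) put [k = ceil(m/n)].  In every profile some query has winning
    value at most [1/k]: otherwise assign each query to one of its winners;
    a player assigned [c] queries then holds mass [> c/k] on them, and since
    her document has total mass at most [1] she gets at most [k - 1]
    queries, so the [n] players cover at most [n (k - 1) < m] queries.
    Hence every profile has [max_j |p - w_j| >= p - 1/k], which is exactly
    the value attained by [s*].  Exposure is part of being an equilibrium. *)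

From Stdlib Require Import Reals Lra Lia Arith ClassicalEpsilon.
Open Scope R_scope.

Lemma ceilR_spec (x : R) : x <= IZR (ceilR x) < x + 1.
Proof.
  unfold ceilR; rewrite opp_IZR.
  destruct (base_Int_part (- x)); lra.
Qed.

Lemma ceilR_ratio_spec (n m : nat) :
  (0 < n)%nat -> (n < m)%nat ->
  (1 <= ceilR (INR m / INR n))%Z /\
  INR n * (IZR (ceilR (INR m / INR n)) - 1) < INR m.
Proof.
  intros Hn Hnm.
  assert (Hn0 : 0 < INR n) by (apply lt_0_INR; exact Hn).
  assert (Hratio : 1 < INR m / INR n).
  { apply Rmult_lt_reg_r with (INR n); [exact Hn0|].
    unfold Rdiv; rewrite Rmult_assoc, Rinv_l, Rmult_1_l, Rmult_1_r by lra.
    apply lt_INR; exact Hnm. }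
  destruct (ceilR_spec (INR m / INR n)) as [Hge Hlt].
  split.
  - apply le_IZR; change (IZR 1) with 1; lra.
  - (* hides the ceiling, so that [replace] does not rewrite [INR m] inside it *)
    set (k := IZR (ceilR (INR m / INR n))) in *.
    replace (INR m) with (INR n * (INR m / INR n)) by (field; apply Rgt_not_eq, Hn0).
    apply Rmult_lt_compat_l; lra.
Qed.

Lemma rmax_ge0 (k : nat) (g : nat -> R) : 0 <= rmax k g.
Proof.
  induction k as [|k IH]; simpl; [lra|].
  eapply Rle_trans; [exact IH | apply Rmax_l].
Qed.

Lemma rmax_ub (k : nat) (g : nat -> R) (j : nat) : (j < k)%nat -> g j <= rmax k g.
Proof.
  induction k as [|k IH]; intros Hj; simpl; [lia|].
  destruct (Nat.eq_dec j k) as [->|Hne]; [apply Rmax_r|].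
  eapply Rle_trans; [apply IH; lia | apply Rmax_l].
Qed.

Lemma rmax_lub (k : nat) (g : nat -> R) (B : R) :
  0 <= B -> (forall j, (j < k)%nat -> g j <= B) -> rmax k g <= B.
Proof.
  intros HB; induction k as [|k IH]; intros Hg; simpl; [lra|].
  apply Rmax_lub; [apply IH; intros | apply Hg]; auto.
Qed.

Lemma rsum_ext (k : nat) (g h : nat -> R) :
  (forall j, (j < k)%nat -> g j = h j) -> rsum k g = rsum k h.
Proof.
  induction k as [|k IH]; intros Hgh; simpl; [reflexivity|].
  rewrite IH, Hgh; auto.
Qed.

Lemma rsum_le (k : nat) (g h : nat -> R) :
  (forall j, (j < k)%nat -> g j <= h j) -> rsum k g <= rsum k h.
Proof.
  induction k as [|k IH]; intros Hgh; simpl; [lra|].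
  apply Rplus_le_compat; [apply IH; intros | apply Hgh]; auto.
Qed.

Lemma rsum_const (k : nat) (c : R) : rsum k (fun _ => c) = INR k * c.
Proof. induction k as [|k IH]; simpl rsum; [simpl; lra|]. rewrite IH, S_INR; lra. Qed.

Lemma rsum_ge0 (k : nat) (g : nat -> R) :
  (forall j, (j < k)%nat -> 0 <= g j) -> 0 <= rsum k g.
Proof.
  intros Hg; pose proof (rsum_le k (fun _ => 0) g Hg) as Hle.
  rewrite rsum_const in Hle; lra.
Qed.

Lemma rsumD (k : nat) (g h : nat -> R) :
  rsum k (fun i => g i + h i) = rsum k g + rsum k h.
Proof. induction k as [|k IH]; simpl; [lra|]. rewrite IH; lra. Qed.

Lemma rsum_delta (a k : nat) :
  rsum k (fun i => if Nat.eqb a i then 1 else 0) = if Nat.ltb a k then 1 else 0.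
Proof.
  induction k as [|k IH]; simpl rsum; [destruct a; reflexivity|].
  rewrite IH.
  destruct (Nat.eqb_spec a k), (Nat.ltb_spec a k), (Nat.ltb_spec a (S k));
    lra || lia.
Qed.

Fixpoint fiber_card (M : nat) (g : nat -> nat) (i : nat) : nat :=
  match M with
  | O => O
  | S M' => (fiber_card M' g i + if Nat.eqb (g M') i then 1 else 0)%nat
  end.

Lemma INR_fiber_card_S (M : nat) (g : nat -> nat) (i : nat) :
  INR (fiber_card (S M) g i) = INR (fiber_card M g i) + if Nat.eqb (g M) i then 1 else 0.
Proof. simpl fiber_card; rewrite plus_INR; destruct (Nat.eqb (g M) i); reflexivity. Qed.

Lemma rsum_fiber_card (n M : nat) (g : nat -> nat) :
  (forall j, (j < M)%nat -> (g j < n)%nat) ->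
  rsum n (fun i => INR (fiber_card M g i)) = INR M.
Proof.
  induction M as [|M IH]; intros Hg.
  - rewrite (rsum_ext n _ (fun _ => 0)), rsum_const by reflexivity; simpl; lra.
  - rewrite (rsum_ext n _ _ (fun i _ => INR_fiber_card_S M g i)).
    rewrite rsumD, rsum_delta, IH by auto.
    destruct (Nat.ltb_spec (g M) n) as [_|Hge]; [rewrite S_INR; lra|].
    specialize (Hg M); lia.
Qed.

Lemma fiber_card_mul_lt (M : nat) (g : nat -> nat) (i : nat) (v : nat -> R) (c : R) :
  (forall j, (j < M)%nat -> g j = i -> c < v j) ->
  (forall j, (j < M)%nat -> 0 <= v j) ->
  (0 < fiber_card M g i)%nat -> INR (fiber_card M g i) * c < rsum M v.
Proof.
  induction M as [|M IH]; intros Hc Hv Hpos; simpl in Hpos; [lia|].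
  rewrite INR_fiber_card_S; simpl rsum.
  assert (HvM : 0 <= v M) by (apply Hv; lia).
  assert (Hsum : 0 <= rsum M v) by (apply rsum_ge0; intros; apply Hv; lia).
  assert (IH' : (0 < fiber_card M g i)%nat -> INR (fiber_card M g i) * c < rsum M v)
    by (apply IH; intros; [apply Hc | apply Hv]; auto; lia).
  destruct (Nat.eqb_spec (g M) i) as [Hi|Hi].
  - assert (HcM : c < v M) by (apply Hc; auto; lia).
    destruct (Nat.eq_dec (fiber_card M g i) 0) as [->|Hne]; simpl; [lra|].
    pose proof (IH' ltac:(lia)); lra.
  - rewrite Nat.add_0_r in Hpos; pose proof (IH' Hpos); lra.
Qed.

Lemma fiber_card_le_mass (M : nat) (g : nat -> nat) (i : nat) (v : nat -> R) (k : Z) :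
  (1 <= k)%Z ->
  (forall j, (j < M)%nat -> g j = i -> 1 / IZR k < v j) ->
  (forall j, (j < M)%nat -> 0 <= v j) ->
  rsum M v <= 1 -> INR (fiber_card M g i) <= IZR k - 1.
Proof.
  intros Hk Hc Hv Hmass.
  assert (Hk0 : 0 < IZR k) by (apply IZR_lt; lia).
  rewrite INR_IZR_INZ, <- minus_IZR; apply IZR_le.
  destruct (Nat.eq_dec (fiber_card M g i) 0) as [->|Hne]; [simpl; lia|].
  assert (Hlt : INR (fiber_card M g i) * (1 / IZR k) < 1).
  { eapply Rlt_le_trans; [apply fiber_card_mul_lt | exact Hmass]; auto; lia. }
  assert (Hlt' : INR (fiber_card M g i) < IZR k).
  { apply Rmult_lt_reg_r with (1 / IZR k); [apply Rdiv_lt_0_compat|]; try lra.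
    field_simplify; lra. }
  rewrite INR_IZR_INZ in Hlt'; apply lt_IZR in Hlt'; lia.
Qed.

Section Game.
Variables (n m : nat) (f : R -> R) (t : R).

Definition chosen_winner (s : profile) (j : nat) : nat :=
  epsilon (inhabits O) (fun i => winner n f t s i j).

Lemma wval_chosen_winner (s : profile) (j : nat) :
  has_winner n f t s j ->
  winner n f t s (chosen_winner s j) j /\ wval n f t s j = s (chosen_winner s j) j.
Proof.
  intros Hj; unfold wval.
  destruct (excluded_middle_informative (has_winner n f t s j)) as [_|]; [|contradiction].
  split; [exact (epsilon_spec _ _ Hj) | reflexivity].
Qed.

Lemma wval_no_winner (s : profile) (j : nat) :
  ~ has_winner n f t s j -> wval n f t s j = 0.
Proof.
  intros Hj; unfold wval.
  destruct (excluded_middle_informative (has_winner n f t s j)); [contradiction | reflexivity].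
Qed.

Lemma exists_wval_le (s : profile) (k : Z) :
  valid_profile n m s -> (1 <= k)%Z -> INR n * (IZR k - 1) < INR m ->
  exists j, (j < m)%nat /\ wval n f t s j <= 1 / IZR k.
Proof.
  intros Hs Hk Hnk.
  assert (Hk0 : 0 < IZR k) by (apply IZR_lt; lia).
  apply Classical_Prop.NNPP; intros Hno.
  assert (Hhigh : forall j, (j < m)%nat -> 1 / IZR k < wval n f t s j).
  { intros j Hj; apply Rnot_le_lt; intros Hle; apply Hno; eauto. }
  assert (Hwin : forall j, (j < m)%nat ->
    winner n f t s (chosen_winner s j) j /\ wval n f t s j = s (chosen_winner s j) j).
  { intros j Hj; apply wval_chosen_winner.
    destruct (Classical_Prop.classic (has_winner n f t s j)) as [Hhas|Hnone]; [exact Hhas|].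
    pose proof (Hhigh j Hj) as Hj'; rewrite (wval_no_winner s j Hnone) in Hj'.
    assert (0 < 1 / IZR k) by (apply Rdiv_lt_0_compat; lra); lra. }
  assert (Hload : forall i, (i < n)%nat -> INR (fiber_card m (chosen_winner s) i) <= IZR k - 1).
  { intros i Hi; destruct (Hs i Hi) as [Hbox Hmass].
    apply (fiber_card_le_mass _ _ _ (s i)); auto.
    - intros j Hj <-; rewrite <- (proj2 (Hwin j Hj)); auto.
    - intros j Hj; apply Hbox, Hj. }
  assert (Hcover : rsum n (fun i => INR (fiber_card m (chosen_winner s) i)) = INR m).
  { apply rsum_fiber_card; intros j Hj; apply (proj1 (Hwin j Hj)). }
  pose proof (rsum_le n _ (fun _ => IZR k - 1) Hload) as Hbound.
  rewrite Hcover, rsum_const in Hbound; lra.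
Qed.

Lemma SW_le0 (p : R) (s : profile) : SW n m f t p s <= 0.
Proof. unfold SW; pose proof (rmax_ge0 m (fun j => Rabs (p - wval n f t s j))); lra. Qed.

Lemma SW_le_query (p : R) (s : profile) (j : nat) :
  (j < m)%nat -> SW n m f t p s <= - Rabs (p - wval n f t s j).
Proof.
  intros Hj; unfold SW.
  pose proof (rmax_ub m (fun j => Rabs (p - wval n f t s j)) j Hj); lra.
Qed.

Lemma SW_ge_const (p w : R) (s : profile) :
  w <= p -> (forall j, (j < m)%nat -> wval n f t s j = w) -> - (p - w) <= SW n m f t p s.
Proof.
  intros Hwp Hw; unfold SW; apply Ropp_le_contravar, rmax_lub; [lra|].
  intros j Hj; rewrite Hw by exact Hj; rewrite Rabs_right; lra.
Qed.

End Game.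

Theorem lemma2 (n m : nat) (p t : R) (f : R -> R) :
  (0 < n)%nat -> (n < m)%nat -> 0 < p <= 1 -> single_peaked f p ->
  (* (i) *)
  ((1 / (IZR (ceilR (2 * INR m / INR n)) - 1) < p /\
    p <= 1 / IZR (ceilR (INR m / INR n)) /\
    t > p - (p * (IZR (floorR (1 / p)) + 1) - 1) /
              (IZR (ceilR (2 * INR m / INR n)) - IZR (floorR (1 / p)))) ->
   forall s, pure_equilibrium n m f t s ->
   (forall j, (j < m)%nat -> wval n f t s j = p) ->
   (forall s', valid_profile n m s' -> SW n m f t p s' <= SW n m f t p s) /\
   (forall j, (j < m)%nat -> exists i, winner n f t s i j)) /\
  (* (ii) *)
  ((p > 1 / IZR (ceilR (INR m / INR n)) /\
    (exists eps, eps > 0 /\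
       (Nat.modulo m n = 0%nat ->
          t >= (1 - INR n / INR m) * (INR n / INR m) + eps) /\
       (Nat.modulo m n <> 0%nat -> t >= 1 / IZR (ceilR (INR m / INR n))))) ->
   forall s, pure_equilibrium n m f t s ->
   (forall j, (j < m)%nat -> wval n f t s j = 1 / IZR (ceilR (INR m / INR n))) ->
   (forall s', valid_profile n m s' -> SW n m f t p s' <= SW n m f t p s) /\
   (forall j, (j < m)%nat -> exists i, winner n f t s i j)).
Proof.
  (* The threshold conditions only serve the existence of [s*]; optimality uses
     nothing but the winning values of [s*]. *)
  intros Hn Hnm Hp _; split.
  - intros _ s [_ [_ Hexposed]] Hw; split; [|exact Hexposed].
    intros s' _; eapply Rle_trans; [apply SW_le0|].
    pose proof (SW_ge_const n m f t p p s (Rle_refl p) Hw); lra.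
  - intros [Hpk _] s [_ [_ Hexposed]] Hw; split; [|exact Hexposed].
    destruct (ceilR_ratio_spec n m Hn Hnm) as [Hk Hnk].
    set (k := ceilR (INR m / INR n)) in *.
    intros s' Hs'.
    destruct (exists_wval_le n m f t s' k Hs' Hk Hnk) as [j [Hj Hlow]].
    eapply Rle_trans; [apply (SW_le_query n m f t p s' j Hj)|].
    eapply Rle_trans; [|apply (SW_ge_const n m f t p (1 / IZR k) s); [lra | exact Hw]].
    pose proof (Rle_abs (p - wval n f t s' j)); lra.
Qed.
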